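(* Let $(F,\tilde F)$ be a semigroupal functor from a semigroupal category to a $K$-linear tensor category. If $H^3(F)=0$, then every first order purely functorial deformation of $F$ extends to an $n$-th order purely functorial deformation for every $n$, and hence to a formal series purely functorial deformation. Likewise, if $(F,\tilde F,F_0)$ is a monoidal functor with $\mathbf H^3(F)=0$, every first order proper deformation of $F$ extends to a formal series proper deformation.
   Context: $X^n(F)=\mathrm{Nat}(F\circ{}^n\otimes,\ \otimes^n\circ F^n)$ with the bar-type coboundary $(\delta\varphi)_{A_1,\dots,A_{n+1}}=\lceil F(A_1)\otimes\varphi_{A_2,\dots}\rceil+\sum_{i=1}^n(-1)^i\lceil\varphi_{\dots,A_i\otimes A_{i+1},\dots}\rceil+(-1)^{n+1}\lceil\varphi_{A_1,\dots,A_n}\otimes F(A_{n+1})\rceil$, where ${}^n\otimes$/$\otimes^n$ are the left/right-parenthesized $n$-fold tensor products and $\lceil\cdot\rceil$ denotes padding with the canonical coherence isomorphisms built from associators, unit constraints, the structure maps of $F$ and their inverses; $H^\bullet(F)$ is its cohomology. For a monoidal functor $(F,\tilde F,F_0)$ (with $F_0:F(I)\to I$) between monoidal categories, the proper deformation complex $C^n(F)\subset X^n(F)$ consists of those $\varphi$ with $\varphi_{A_1,\dots,A_n}=0$ whenever some $A_i=I$; it is a subcomplex, with cohomology $\mathbf H^\bullet(F)$. An $n$-th order purely functorial deformation of $F$ is a semigroupal structure $\tilde F+\sum_{k=1}^nF^{(k)}\epsilon^k$ ($F^{(k)}\in X^2(F)$) on the same underlying functor into the trivial deformation of the target over $K[\epsilon]/\langle\epsilon^{n+1}\rangle$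 (hom-spaces tensored, undeformed structure maps); a formal series deformation is the analogous notion over $K[[\epsilon]]$. A proper deformation of a monoidal functor is a purely functorial deformation which together with the undeformed $F_0$ (i.e. $F_0\otimes1$) is a monoidal functor. *)

From HB Require Import structures.
From mathcomp Require Import all_boot all_algebra.
Set Implicit Arguments. Unset Strict Implicit. Unset Printing Implicit Defensive.
Import GRing.Theory.
Local Open Scope ring_scope.

Record SemiCatData (Ob : Type) (Hom : Ob -> Ob -> Type) := SemiCatData_ {
  comp : forall A B C, Hom B C -> Hom A B -> Hom A C;
  idm : forall A, Hom A A;
  tens : Ob -> Ob -> Ob;
  tensm : forall A B A' B', Hom A A' -> Hom B B' -> Hom (tens A B) (tens A' B');
  asc : forall A B C, Hom (tens (tens A B) C) (tens A (tens B C));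
  asci : forall A B C, Hom (tens A (tens B C)) (tens (tens A B) C) }.
Arguments comp {Ob Hom} s {A B C}.
Arguments idm {Ob Hom} s A.
Arguments tens {Ob Hom} s.
Arguments tensm {Ob Hom} s {A B A' B'}.
Arguments asc {Ob Hom} s A B C.
Arguments asci {Ob Hom} s A B C.

Definition semicat_laws Ob (Hom : Ob -> Ob -> Type) (s : SemiCatData Hom) : Prop :=
  (forall A B C D (h : Hom C D) (g : Hom B C) (f : Hom A B),
      comp s h (comp s g f) = comp s (comp s h g) f) /\
  (forall A B (f : Hom A B), comp s (idm s B) f = f) /\
  (forall A B (f : Hom A B), comp s f (idm s A) = f) /\
  (forall A B, tensm s (idm s A) (idm s B) = idm s (tens s A B)) /\
  (forall A B C A' B' C' (g : Hom B C) (f : Hom A B) (g' : Hom B' C') (f' : Hom A' B'),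
      tensm s (comp s g f) (comp s g' f') = comp s (tensm s g g') (tensm s f f')) /\
  (forall A B C, comp s (asci s A B C) (asc s A B C) = idm s _) /\
  (forall A B C, comp s (asc s A B C) (asci s A B C) = idm s _) /\
  (forall A B C A' B' C' (f : Hom A A') (g : Hom B B') (h : Hom C C'),
      comp s (asc s A' B' C') (tensm s (tensm s f g) h)
      = comp s (tensm s f (tensm s g h)) (asc s A B C)) /\
  (forall A B C D,
      comp s (asc s A B (tens s C D)) (asc s (tens s A B) C D)
      = comp s (tensm s (idm s A) (asc s B C D))
          (comp s (asc s A (tens s B C) D) (tensm s (asc s A B C) (idm s D)))).

Record MonCatData (Ob : Type) (Hom : Ob -> Ob -> Type) := MonCatData_ {
  msemi : SemiCatData Hom;
  unit : Ob;
  lu : forall A, Hom (tens msemi unit A) A;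
  lui : forall A, Hom A (tens msemi unit A);
  ru : forall A, Hom (tens msemi A unit) A;
  rui : forall A, Hom A (tens msemi A unit) }.
Arguments msemi {Ob Hom} m.
Arguments unit {Ob Hom} m.
Arguments lu {Ob Hom} m A.
Arguments lui {Ob Hom} m A.
Arguments ru {Ob Hom} m A.
Arguments rui {Ob Hom} m A.

Definition moncat_laws Ob (Hom : Ob -> Ob -> Type) (m : MonCatData Hom) : Prop :=
  let s := msemi m in
  semicat_laws s /\
  (forall A, comp s (lui m A) (lu m A) = idm s _) /\
  (forall A, comp s (lu m A) (lui m A) = idm s _) /\
  (forall A, comp s (rui m A) (ru m A) = idm s _) /\
  (forall A, comp s (ru m A) (rui m A) = idm s _) /\
  (forall A A' (f : Hom A A'),
      comp s (lu m A') (tensm s (idm s (unit m)) f) = comp s f (lu m A)) /\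
  (forall A A' (f : Hom A A'),
      comp s (ru m A') (tensm s f (idm s (unit m))) = comp s f (ru m A)) /\
  (forall A B,
      comp s (tensm s (idm s A) (lu m B)) (asc s A (unit m) B)
      = tensm s (ru m A) (idm s B)).

Definition bilin_laws (K : fieldType) Ob (Hom : Ob -> Ob -> lmodType K)
    (s : SemiCatData (fun A B => Hom A B : Type)) : Prop :=
  (forall A B C (g : Hom B C) (a : K) (f1 f2 : Hom A B),
      comp s g (a *: f1 + f2) = a *: comp s g f1 + comp s g f2) /\
  (forall A B C (f : Hom A B) (a : K) (g1 g2 : Hom B C),
      comp s (a *: g1 + g2) f = a *: comp s g1 f + comp s g2 f) /\
  (forall A B A' B' (g : Hom B B') (a : K) (f1 f2 : Hom A A'),
      tensm s (a *: f1 + f2) g = a *: tensm s f1 g + tensm s f2 g) /\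
  (forall A B A' B' (f : Hom A A') (a : K) (g1 g2 : Hom B B'),
      tensm s f (a *: g1 + g2) = a *: tensm s f g1 + tensm s f g2).

Record SemiCat := SemiCat_ {
  sob : Type;
  shom : sob -> sob -> Type;
  sdat : SemiCatData shom;
  slaws : semicat_laws sdat }.

Record MonCat := MonCat_ {
  mob : Type;
  mhom : mob -> mob -> Type;
  mdat : MonCatData mhom;
  mlaws : moncat_laws mdat }.

Definition semi_of (C : MonCat) : SemiCat :=
  @SemiCat_ (mob C) (@mhom C) (msemi (mdat C)) (proj1 (mlaws C)).

Record LinMonCat (K : fieldType) := LinMonCat_ {
  lob : Type;
  lhom : lob -> lob -> lmodType K;
  ldat : MonCatData (fun A B => lhom A B : Type);
  llaws : moncat_laws ldat;
  llin : bilin_laws (msemi ldat) }.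

Section SemiFunctors.
Variable K : fieldType.
Variable C : SemiCat.
Variable D : LinMonCat K.

Local Notation CH := (@shom C).
Local Notation cc := (comp (sdat C)).
Local Notation cid := (idm (sdat C)).
Local Notation ct := (tens (sdat C)).
Local Notation ctm := (tensm (sdat C)).
Local Notation casc := (asc (sdat C)).

Local Notation DH := (@lhom K D).
Local Notation dc := (comp (msemi (ldat D))).
Local Notation did := (idm (msemi (ldat D))).
Local Notation dt := (tens (msemi (ldat D))).
Local Notation dtm := (tensm (msemi (ldat D))).
Local Notation dasc := (asc (msemi (ldat D))).

Record SemiFunctor := SemiFunctor_ {
  Fob : sob C -> lob D;
  Fmor : forall A B, CH A B -> DH (Fob A) (Fob B);
  Ftil : forall A B, DH (Fob (ct A B)) (dt (Fob A) (Fob B));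
  Ftinv : forall A B, DH (dt (Fob A) (Fob B)) (Fob (ct A B));
  fm_id : forall A, Fmor (cid A) = did (Fob A);
  fm_comp : forall A B E (g : CH B E) (f : CH A B), Fmor (cc g f) = dc (Fmor g) (Fmor f);
  ft_nat : forall A B A' B' (f : CH A A') (g : CH B B'),
      dc (Ftil A' B') (Fmor (ctm f g)) = dc (dtm (Fmor f) (Fmor g)) (Ftil A B);
  ft_inv1 : forall A B, dc (Ftinv A B) (Ftil A B) = did _;
  ft_inv2 : forall A B, dc (Ftil A B) (Ftinv A B) = did _;
  ft_hex : forall A B E,
      dc (dasc (Fob A) (Fob B) (Fob E)) (dc (dtm (Ftil A B) (did (Fob E))) (Ftil (ct A B) E))
      = dc (dtm (did (Fob A)) (Ftil B E)) (dc (Ftil A (ct B E)) (Fmor (casc A B E))) }.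

Variable F : SemiFunctor.
Local Notation FO := (Fob F).
Local Notation FM := (Fmor F).
Local Notation FT := (Ftil F).

(* Cochain spaces X^2, X^3, X^4 (families; naturality is a separate predicate).
   Source: left-parenthesized tensor, target: right-parenthesized tensor. *)
Definition fam2 := forall X Y : sob C, DH (FO (ct X Y)) (dt (FO X) (FO Y)).
Definition fam3 := forall X Y Z : sob C,
  DH (FO (ct (ct X Y) Z)) (dt (FO X) (dt (FO Y) (FO Z))).
Definition fam4 := forall X Y Z W : sob C,
  DH (FO (ct (ct (ct X Y) Z) W)) (dt (FO X) (dt (FO Y) (dt (FO Z) (FO W)))).

Definition natural2 (p : fam2) : Prop :=
  forall X Y X' Y' (f : CH X X') (g : CH Y Y'),
    dc (p X' Y') (FM (ctm f g)) = dc (dtm (FM f) (FM g)) (p X Y).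

Definition natural3 (p : fam3) : Prop :=
  forall X Y Z X' Y' Z' (f : CH X X') (g : CH Y Y') (h : CH Z Z'),
    dc (p X' Y' Z') (FM (ctm (ctm f g) h))
    = dc (dtm (FM f) (dtm (FM g) (FM h))) (p X Y Z).

(* coboundary X^2 -> X^3, padded with canonical coherence isomorphisms *)
Definition delta2 (p : fam2) : fam3 := fun X Y Z =>
  let t1 := dc (dtm (did (FO X)) (p Y Z)) (dc (FT X (ct Y Z)) (FM (casc X Y Z))) in
  let t2 := dc (dasc (FO X) (FO Y) (FO Z))
                (dc (dtm (FT X Y) (did (FO Z))) (p (ct X Y) Z)) in
  let t3 := dc (dtm (did (FO X)) (FT Y Z)) (dc (p X (ct Y Z)) (FM (casc X Y Z))) in
  let t4 := dc (dasc (FO X) (FO Y) (FO Z))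
                (dc (dtm (p X Y) (did (FO Z))) (FT (ct X Y) Z)) in
  t1 - t2 + t3 - t4.

(* coboundary X^3 -> X^4, padded with canonical coherence isomorphisms *)
Definition delta3 (p : fam3) : fam4 := fun X Y Z W =>
  let t0 := dc (dtm (did (FO X)) (p Y Z W))
               (dc (FT X (ct (ct Y Z) W))
                   (FM (cc (casc X (ct Y Z) W) (ctm (casc X Y Z) (cid W))))) in
  let t1 := dc (dasc (FO X) (FO Y) (dt (FO Z) (FO W)))
               (dc (dtm (FT X Y) (did (dt (FO Z) (FO W)))) (p (ct X Y) Z W)) in
  let t2 := dc (dtm (did (FO X)) (dasc (FO Y) (FO Z) (FO W)))
               (dc (dtm (did (FO X)) (dtm (FT Y Z) (did (FO W))))
                   (dc (p X (ct Y Z) W) (FM (ctm (casc X Y Z) (cid W))))) in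
  let t3 := dc (dtm (did (FO X)) (dtm (did (FO Y)) (FT Z W)))
               (dc (p X Y (ct Z W)) (FM (casc (ct X Y) Z W))) in
  let t4 := dc (dtm (did (FO X)) (dasc (FO Y) (FO Z) (FO W)))
               (dc (dasc (FO X) (dt (FO Y) (FO Z)) (FO W))
                   (dc (dtm (p X Y Z) (did (FO W))) (FT (ct (ct X Y) Z) W))) in
  t0 - t1 + t2 - t3 + t4.

Definition H3_vanishes : Prop :=
  forall p : fam3, natural3 p -> (forall X Y Z W, delta3 p X Y Z W = 0) ->
    exists q : fam2, natural2 q /\ (forall X Y Z, delta2 q X Y Z = p X Y Z).

(* The structure sequence F~ + sum_{k>=1} psi k eps^k *)
Definition defseq (psi : nat -> fam2) (k : nat) : fam2 :=
  if k is 0 then FT else psi k.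

(* coefficient of eps^m in the associativity (hexagon) axiom of the deformed structure *)
Definition hex_coef (s : nat -> fam2) (m : nat) : Prop :=
  forall X Y Z,
    \sum_(i < m.+1)
       dc (dasc (FO X) (FO Y) (FO Z))
          (dc (dtm (s i X Y) (did (FO Z))) (s (m - i)%N (ct X Y) Z))
    = \sum_(i < m.+1)
       dc (dtm (did (FO X)) (s i Y Z))
          (dc (s (m - i)%N X (ct Y Z)) (FM (casc X Y Z))).

(* n-th order purely functorial deformation F~ + sum_{k=1}^n psi k eps^k
   (only psi 1, ..., psi n are relevant) *)
Definition is_deformation (n : nat) (psi : nat -> fam2) : Prop :=
  (forall k, (0 < k <= n)%N -> natural2 (psi k)) /\
  (forall m, (m <= n)%N -> hex_coef (defseq psi) m).

Definition is_series_deformation (psi : nat -> fam2) : Prop :=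
  forall n, is_deformation n psi.

Definition is_first_order (phi : fam2) : Prop := is_deformation 1 (fun _ => phi).

Definition extends (phi : fam2) (psi : nat -> fam2) : Prop :=
  forall X Y, psi 1%N X Y = phi X Y.

End SemiFunctors.

Section MonFunctors.
Variable K : fieldType.
Variable C : MonCat.
Variable D : LinMonCat K.

Local Notation DH := (@lhom K D).
Local Notation dc := (comp (msemi (ldat D))).
Local Notation did := (idm (msemi (ldat D))).
Local Notation dtm := (tensm (msemi (ldat D))).

Record MonFunctor := MonFunctor_ {
  mfs : SemiFunctor (semi_of C) D;
  f0 : DH (Fob mfs (unit (mdat C))) (unit (ldat D));
  f0i : DH (unit (ldat D)) (Fob mfs (unit (mdat C)));
  f0_inv1 : dc f0i f0 = did _;
  f0_inv2 : dc f0 f0i = did _;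
  f_lunit : forall A,
      dc (lu (ldat D) (Fob mfs A))
         (dc (dtm f0 (did (Fob mfs A))) (Ftil mfs (unit (mdat C)) A))
      = Fmor mfs (lu (mdat C) A);
  f_runit : forall A,
      dc (ru (ldat D) (Fob mfs A))
         (dc (dtm (did (Fob mfs A)) f0) (Ftil mfs A (unit (mdat C))))
      = Fmor mfs (ru (mdat C) A) }.

Variable F : MonFunctor.
Local Notation FS := (mfs F).
Local Notation I := (unit (mdat C)).

Definition proper2 (p : fam2 FS) : Prop :=
  (forall Y, p I Y = 0) /\ (forall X, p X I = 0).
Definition proper3 (p : fam3 FS) : Prop :=
  (forall Y Z, p I Y Z = 0) /\ (forall X Z, p X I Z = 0) /\ (forall X Y, p X Y I = 0).

Definition properH3_vanishes : Prop :=
  forall p : fam3 FS, natural3 p -> proper3 p ->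
    (forall X Y Z W, delta3 p X Y Z W = 0) ->
    exists q : fam2 FS, natural2 q /\ proper2 q /\ (forall X Y Z, delta2 q X Y Z = p X Y Z).

(* coefficient (k >= 1) of eps^k in the unit axioms for (F~ + sum psi k eps^k, F_0 (x) 1) *)
Definition unit_coef (psi : nat -> fam2 FS) (k : nat) : Prop :=
  (forall A, dc (lu (ldat D) (Fob FS A)) (dc (dtm (f0 F) (did (Fob FS A))) (psi k I A)) = 0) /\
  (forall A, dc (ru (ldat D) (Fob FS A)) (dc (dtm (did (Fob FS A)) (f0 F)) (psi k A I)) = 0).

Definition is_proper_deformation (n : nat) (psi : nat -> fam2 FS) : Prop :=
  is_deformation n psi /\ (forall k, (0 < k <= n)%N -> unit_coef psi k).

Definition is_proper_series_deformation (psi : nat -> fam2 FS) : Prop :=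
  forall n, is_proper_deformation n psi.

Definition is_proper_first_order (phi : fam2 FS) : Prop :=
  is_proper_deformation 1 (fun _ => phi).

End MonFunctors.

(* The coefficient of eps^(n+1) in the hexagon axiom of F~ + sum_k psi_k eps^k
   is an obstruction built from F~, psi_1, ..., psi_n alone, minus delta2 psi_(n+1).
   The obstruction is natural, and a Bianchi-type identity, which follows from the
   pentagon axioms and naturality, shows that it is a 3-cocycle as soon as
   psi_1, ..., psi_n form an n-th order deformation.  When H^3(F) = 0 it is a
   coboundary delta2 q, and psi_(n+1) := q extends the deformation; choosing such
   a q at every order gives a formal series.  For a proper deformation of a
   monoidal functor the obstruction is proper, so q can be taken in the proper
   complex, and proper cochains satisfy the unit axioms automatically. *)

From Pilot Require Import Defs.
From mathcomp Require Import all_boot all_algebra zify.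
From Stdlib Require Import ClassicalEpsilon.
Set Implicit Arguments. Unset Strict Implicit. Unset Printing Implicit Defensive.
Import GRing.Theory.
Local Open Scope ring_scope.

Section ZmodIdentities.
Variable V : zmodType.

Lemma alternating5B (a0 a1 a2 a3 a4 b0 b1 b2 b3 b4 : V) :
  (a0 - b0) - (a1 - b1) + (a2 - b2) - (a3 - b3) + (a4 - b4)
  = (a0 - a1 + a2 - a3 + a4) - (b0 - b1 + b2 - b3 + b4).
Proof. by rewrite !opprD !opprK !addrA [LHS](ACl (1*3*5*7*9*2*4*6*8*10)). Qed.

Lemma alternating5B_eq0 (a0 a1 a2 a3 a4 b0 b1 b2 b3 b4 : V) :
  a0 = b2 -> a4 = a1 -> a2 = b4 -> b0 = b3 -> b1 = a3 ->
  (a0 - a1 + a2 - a3 + a4) - (b0 - b1 + b2 - b3 + b4) = 0.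
Proof.
move=> -> -> -> -> ->.
rewrite !opprD !opprK !addrA (@GRing.add V).[ACl (1*8*2*5*3*10*4*7*6*9)].
by rewrite !(subrr, addNr, add0r).
Qed.

Lemma subr_outer_terms (a b c d x y : V) :
  (a + x + b) - (c + y + d) = (0 + x + 0) - (0 + y + 0) - (d - a + c - b).
Proof. by rewrite !add0r !addr0 !opprD !opprK !addrA [LHS](ACl (2*5*6*1*4*3)). Qed.

Section AdditiveMap.
Variables (U : zmodType) (f : U -> V).
Hypothesis fD : {morph f : x y / x + y}.

Lemma morphD_0 : f 0 = 0.
Proof. by apply: (@addrI _ (f 0)); rewrite -fD !addr0. Qed.

Lemma morphD_B : {morph f : x y / x - y}.
Proof.
move=> x y; apply: (@addrI _ (f y)).
by rewrite -fD (addrC y) subrK addrCA subrr addr0.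
Qed.

End AdditiveMap.

Lemma sumr_ord_ends m (f : nat -> V) :
  \sum_(i < m.+2) f i = f 0%N + \sum_(i < m) f i.+1 + f m.+1.
Proof. by rewrite big_ord_recl big_ord_recr /= addrA. Qed.

Definition triple_sum N (f : nat -> nat -> nat -> V) : V :=
  \sum_(i < N.+1) \sum_(j < N.+1) \sum_(k < N.+1)
     (if (i + j + k == N)%N then f i j k else 0).

Lemma eq_triple_sum N (f g : nat -> nat -> nat -> V) :
  (forall i j k, f i j k = g i j k) -> triple_sum N f = triple_sum N g.
Proof.
move=> fg; apply: eq_bigr => i _; apply: eq_bigr => j _; apply: eq_bigr => k _.
by rewrite fg.
Qed.

Lemma triple_sumC N (f : nat -> nat -> nat -> V) :
  triple_sum N (fun i j k => f j i k) = triple_sum N f.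
Proof.
rewrite /triple_sum exchange_big /=; apply: eq_bigr => a _; apply: eq_bigr => b _.
by apply: eq_bigr => c _; rewrite (addnC b a).
Qed.

Lemma triple_sum_rot N (f : nat -> nat -> nat -> V) :
  triple_sum N (fun i j k => f j k i) = triple_sum N f.
Proof.
rewrite /triple_sum exchange_big /=; apply: eq_bigr => a _.
rewrite exchange_big /=; apply: eq_bigr => b _; apply: eq_bigr => c _.
by have -> : (c + a + b = a + b + c)%N by lia.
Qed.

Lemma triple_sumD N (f g : nat -> nat -> nat -> V) :
  triple_sum N (fun i j k => f i j k + g i j k) = triple_sum N f + triple_sum N g.
Proof.
rewrite /triple_sum -big_split; apply: eq_bigr => i _.
rewrite -big_split; apply: eq_bigr => j _.
by rewrite -big_split; apply: eq_bigr => k _; case: ifP => _ /=; rewrite ?addr0.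
Qed.

Lemma triple_sumB N (f g : nat -> nat -> nat -> V) :
  triple_sum N (fun i j k => f i j k - g i j k) = triple_sum N f - triple_sum N g.
Proof.
rewrite /triple_sum -sumrB; apply: eq_bigr => i _.
rewrite -sumrB; apply: eq_bigr => j _.
by rewrite -sumrB; apply: eq_bigr => k _; case: ifP => _; rewrite ?subr0.
Qed.

Lemma triple_sumE N (f : nat -> nat -> nat -> V) :
  \sum_(i < N.+1) \sum_(j < (N - i).+1) f i j (N - i - j)%N = triple_sum N f.
Proof.
rewrite /triple_sum; apply: eq_bigr => i _.
have := ltn_ord i; rewrite ltnS => le_iN.
have le_NiN : ((N - i).+1 <= N.+1)%N by lia.
rewrite (big_ord_widen _ (fun j => f i j (N - i - j)%N) le_NiN) big_mkcond /=.
apply: eq_bigr => j _; case: (leqP (i + j) N) => ijN.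
- have -> : (j < (N - i).+1)%N by lia.
  have kN : (N - i - j < N.+1)%N by lia.
  rewrite (bigD1 (Ordinal kN)) //= big1 ?addr0; last first.
    move=> k /eqP kNij; case: eqP => // ijkN.
    by case: kNij; apply: val_inj => /=; lia.
  by have -> : (i + j + (N - i - j) == N)%N by apply/eqP; lia.
- have -> : (j < (N - i).+1)%N = false by lia.
  by rewrite big1 // => k _; case: eqP => // ?; lia.
Qed.

End ZmodIdentities.

Section SemiCatTheory.
Variables (Ob : Type) (Hom : Ob -> Ob -> Type) (s : SemiCatData Hom).
Hypothesis L : semicat_laws s.
Local Notation cmp := (Defs.comp s).
Local Notation id := (idm s).
Local Notation tm := (tensm s).
Local Notation a := (asc s).

Lemma compmA A B E G (h : Hom E G) (g : Hom B E) (f : Hom A B) :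
  cmp h (cmp g f) = cmp (cmp h g) f.
Proof. by case: L => [-> _]. Qed.

Lemma comp1m A B (f : Hom A B) : cmp (id B) f = f.
Proof. by case: L => [_ [-> _]]. Qed.

Lemma compm1 A B (f : Hom A B) : cmp f (id A) = f.
Proof. by case: L => [_ [_ [-> _]]]. Qed.

Lemma tensm11 A B : tm (id A) (id B) = id (tens s A B).
Proof. by case: L => [_ [_ [_ [-> _]]]]. Qed.

Lemma tensm_comp A B E A' B' E' (g : Hom B E) (f : Hom A B) (g' : Hom B' E') (f' : Hom A' B') :
  tm (cmp g f) (cmp g' f') = cmp (tm g g') (tm f f').
Proof. by case: L => [_ [_ [_ [_ [-> _]]]]]. Qed.

Lemma asc_natural A B E A' B' E' (f : Hom A A') (g : Hom B B') (h : Hom E E') :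
  cmp (a A' B' E') (tm (tm f g) h) = cmp (tm f (tm g h)) (a A B E).
Proof. by case: L => [_ [_ [_ [_ [_ [_ [_ [-> _]]]]]]]]. Qed.

Lemma pentagon A B E G :
  cmp (a A B (tens s E G)) (a (tens s A B) E G)
  = cmp (tm (id A) (a B E G)) (cmp (a A (tens s B E) G) (tm (a A B E) (id G))).
Proof. by case: L => [_ [_ [_ [_ [_ [_ [_ [_ ->]]]]]]]]. Qed.

Lemma compmA_eq A B E E' G (f : Hom E G) (g : Hom B E) (f' : Hom E' G) (g' : Hom B E')
    (h : Hom A B) :
  cmp f g = cmp f' g' -> cmp f (cmp g h) = cmp f' (cmp g' h).
Proof. by move=> fg; rewrite !compmA fg. Qed.

Lemma tensm1_comp A B E G (g : Hom B E) (f : Hom A B) :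
  tm (id G) (cmp g f) = cmp (tm (id G) g) (tm (id G) f).
Proof. by rewrite -tensm_comp comp1m. Qed.

Lemma tensm_comp1 A B E G (g : Hom B E) (f : Hom A B) :
  tm (cmp g f) (id G) = cmp (tm g (id G)) (tm f (id G)).
Proof. by rewrite -tensm_comp comp1m. Qed.

Lemma tensm_interchange A B A' B' (f : Hom A A') (g : Hom B B') :
  cmp (tm (id A') g) (tm f (id B)) = cmp (tm f (id B')) (tm (id A) g).
Proof. by rewrite -!tensm_comp !comp1m !compm1. Qed.

End SemiCatTheory.

Section BilinearTheory.
Variables (K : fieldType) (Ob : Type) (Hom : Ob -> Ob -> lmodType K).
Variable s : SemiCatData (fun A B => Hom A B : Type).
Hypothesis bilin : bilin_laws s.
Local Notation cmp := (Defs.comp s).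
Local Notation tm := (tensm s).

Lemma compmDr A B E (g : Hom B E) (f1 f2 : Hom A B) :
  cmp g (f1 + f2) = cmp g f1 + cmp g f2.
Proof. by case: bilin => [gD _]; have := gD _ _ _ g 1 f1 f2; rewrite !scale1r. Qed.

Lemma compmDl A B E (f : Hom A B) (g1 g2 : Hom B E) :
  cmp (g1 + g2) f = cmp g1 f + cmp g2 f.
Proof. by case: bilin => [_ [fD _]]; have := fD _ _ _ f 1 g1 g2; rewrite !scale1r. Qed.

Lemma tensmDl A B A' B' (g : Hom B B') (f1 f2 : Hom A A') :
  tm (f1 + f2) g = tm f1 g + tm f2 g.
Proof. by case: bilin => [_ [_ [gD _]]]; have := gD _ _ _ _ g 1 f1 f2; rewrite !scale1r. Qed.

Lemma tensmDr A B A' B' (f : Hom A A') (g1 g2 : Hom B B') :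
  tm f (g1 + g2) = tm f g1 + tm f g2.
Proof. by case: bilin => [_ [_ [_ fD]]]; have := fD _ _ _ _ f 1 g1 g2; rewrite !scale1r. Qed.

Lemma compm0 {A B E} (g : Hom B E) : cmp g (0 : Hom A B) = 0.
Proof. exact: morphD_0 (compmDr g). Qed.
Lemma comp0m {A B E} (f : Hom A B) : cmp (0 : Hom B E) f = 0.
Proof. exact: morphD_0 (compmDl f). Qed.
Lemma tensm0l {A B A' B'} (g : Hom B B') : tm (0 : Hom A A') g = 0.
Proof. exact: morphD_0 (tensmDl g). Qed.
Lemma tensm0r {A B A' B'} (f : Hom A A') : tm f (0 : Hom B B') = 0.
Proof. exact: morphD_0 (tensmDr f). Qed.

Lemma compmBr A B E (g : Hom B E) (f1 f2 : Hom A B) :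
  cmp g (f1 - f2) = cmp g f1 - cmp g f2.
Proof. exact: morphD_B (compmDr g) _ _. Qed.
Lemma compmBl A B E (f : Hom A B) (g1 g2 : Hom B E) :
  cmp (g1 - g2) f = cmp g1 f - cmp g2 f.
Proof. exact: morphD_B (compmDl f) _ _. Qed.
Lemma tensmBl A B A' B' (g : Hom B B') (f1 f2 : Hom A A') :
  tm (f1 - f2) g = tm f1 g - tm f2 g.
Proof. exact: morphD_B (tensmDl g) _ _. Qed.
Lemma tensmBr A B A' B' (f : Hom A A') (g1 g2 : Hom B B') :
  tm f (g1 - g2) = tm f g1 - tm f g2.
Proof. exact: morphD_B (tensmDr f) _ _. Qed.

Lemma compm_sumr A B E (g : Hom B E) n (f : 'I_n -> Hom A B) :
  cmp g (\sum_(i < n) f i) = \sum_(i < n) cmp g (f i).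
Proof. by elim/big_rec2: _ => [|i y1 y2 _ <-]; rewrite ?compm0 ?compmDr. Qed.
Lemma compm_suml A B E (f : Hom A B) n (g : 'I_n -> Hom B E) :
  cmp (\sum_(i < n) g i) f = \sum_(i < n) cmp (g i) f.
Proof. by elim/big_rec2: _ => [|i y1 y2 _ <-]; rewrite ?comp0m ?compmDl. Qed.
Lemma tensm_suml A B A' B' (g : Hom B B') n (f : 'I_n -> Hom A A') :
  tm (\sum_(i < n) f i) g = \sum_(i < n) tm (f i) g.
Proof. by elim/big_rec2: _ => [|i y1 y2 _ <-]; rewrite ?tensm0l ?tensmDl. Qed.
Lemma tensm_sumr A B A' B' (f : Hom A A') n (g : 'I_n -> Hom B B') :
  tm f (\sum_(i < n) g i) = \sum_(i < n) tm f (g i).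
Proof. by elim/big_rec2: _ => [|i y1 y2 _ <-]; rewrite ?tensm0r ?tensmDr. Qed.

End BilinearTheory.

Section Obstruction.
Variables (K : fieldType) (C : SemiCat) (D : LinMonCat K) (F : SemiFunctor C D).

Local Notation cc := (Defs.comp (sdat C)).
Local Notation cid := (idm (sdat C)).
Local Notation ct := (tens (sdat C)).
Local Notation ctm := (tensm (sdat C)).
Local Notation casc := (asc (sdat C)).
Local Notation dc := (Defs.comp (msemi (ldat D))).
Local Notation did := (idm (msemi (ldat D))).
Local Notation dt := (tens (msemi (ldat D))).
Local Notation dtm := (tensm (msemi (ldat D))).
Local Notation dasc := (asc (msemi (ldat D))).
Local Notation FO := (Fob F).
Local Notation FM := (Fmor F).
Local Notation FT := (Ftil F).

Let CL : semicat_laws (sdat C) := slaws C.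
Let DL : semicat_laws (msemi (ldat D)) := proj1 (llaws D).
Let DB : bilin_laws (msemi (ldat D)) := llin D.

(* The two sides of the hexagon axiom, with [u] the outer and [v] the inner copy
   of the structure map; [hex_coef] compares their convolutions. *)
Definition hexL (u v : fam2 F) : fam3 F := fun X Y Z =>
  dc (dasc (FO X) (FO Y) (FO Z)) (dc (dtm (u X Y) (did (FO Z))) (v (ct X Y) Z)).
Definition hexR (u v : fam2 F) : fam3 F := fun X Y Z =>
  dc (dtm (did (FO X)) (u Y Z)) (dc (v X (ct Y Z)) (FM (casc X Y Z))).

Definition hex_defect (s : nat -> fam2 F) (m : nat) : fam3 F := fun X Y Z =>
  \sum_(i < m.+1) hexL (s i) (s (m - i)%N) X Y Z
  - \sum_(i < m.+1) hexR (s i) (s (m - i)%N) X Y Z.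

Lemma hex_coefP s m : hex_coef s m <-> forall X Y Z, hex_defect s m X Y Z = 0.
Proof.
split=> h X Y Z; apply/eqP.
- by rewrite subr_eq0; apply/eqP/h.
- by rewrite -subr_eq0; apply/eqP/h.
Qed.

Lemma delta2E q X Y Z :
  delta2 q X Y Z
  = hexR q FT X Y Z - hexL FT q X Y Z + hexR FT q X Y Z - hexL q FT X Y Z.
Proof. by []. Qed.

(* The five terms of [delta3], with an arbitrary family [w] in place of [F~]. *)
Definition coface0 (w : fam2 F) (p : fam3 F) : fam4 F := fun X Y Z W =>
  dc (dtm (did (FO X)) (p Y Z W))
     (dc (w X (ct (ct Y Z) W))
         (FM (cc (casc X (ct Y Z) W) (ctm (casc X Y Z) (cid W))))).
Definition coface1 (w : fam2 F) (p : fam3 F) : fam4 F := fun X Y Z W =>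
  dc (dasc (FO X) (FO Y) (dt (FO Z) (FO W)))
     (dc (dtm (w X Y) (did (dt (FO Z) (FO W)))) (p (ct X Y) Z W)).
Definition coface2 (w : fam2 F) (p : fam3 F) : fam4 F := fun X Y Z W =>
  dc (dtm (did (FO X)) (dasc (FO Y) (FO Z) (FO W)))
     (dc (dtm (did (FO X)) (dtm (w Y Z) (did (FO W))))
         (dc (p X (ct Y Z) W) (FM (ctm (casc X Y Z) (cid W))))).
Definition coface3 (w : fam2 F) (p : fam3 F) : fam4 F := fun X Y Z W =>
  dc (dtm (did (FO X)) (dtm (did (FO Y)) (w Z W)))
     (dc (p X Y (ct Z W)) (FM (casc (ct X Y) Z W))).
Definition coface4 (w : fam2 F) (p : fam3 F) : fam4 F := fun X Y Z W =>
  dc (dtm (did (FO X)) (dasc (FO Y) (FO Z) (FO W)))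
     (dc (dasc (FO X) (dt (FO Y) (FO Z)) (FO W))
         (dc (dtm (p X Y Z) (did (FO W))) (w (ct (ct X Y) Z) W))).

Definition delta3_at (w : fam2 F) (p : fam3 F) : fam4 F := fun X Y Z W =>
  coface0 w p X Y Z W - coface1 w p X Y Z W + coface2 w p X Y Z W
  - coface3 w p X Y Z W + coface4 w p X Y Z W.

Section CofacePairing.
Variables (w t u : fam2 F) (X Y Z W : sob C).

Lemma coface0_hexL : coface0 w (hexL t u) X Y Z W = coface2 t (hexR u w) X Y Z W.
Proof. by rewrite /coface0 /coface2 /hexL /hexR !(tensm1_comp DL) fm_comp -!(compmA DL). Qed.

Lemma coface0_hexR :
  natural2 w -> coface0 w (hexR t u) X Y Z W = coface3 t (hexR u w) X Y Z W.
Proof.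
move=> natw; rewrite /coface0 /coface3 /hexR !(tensm1_comp DL) -!(compmA DL).
have := natw _ _ _ _ (cid X) (casc Y Z W); rewrite fm_id => natw_asc.
by rewrite (compmA_eq DL _ (esym natw_asc)) -fm_comp -(pentagon CL) fm_comp.
Qed.

Lemma coface1_hexR : coface1 w (hexR t u) X Y Z W = coface3 t (hexL w u) X Y Z W.
Proof.
rewrite /coface1 /coface3 /hexR /hexL -!(compmA DL).
have := asc_natural DL (did (FO X)) (did (FO Y)) (t Z W); rewrite (tensm11 DL) => nat_t.
by rewrite (compmA_eq DL _ (esym nat_t)) (compmA_eq DL _ (tensm_interchange DL _ _)).
Qed.

Lemma coface4_hexL : coface4 w (hexL t u) X Y Z W = coface1 t (hexL u w) X Y Z W.
Proof.
rewrite /coface4 /coface1 /hexL !(tensm_comp1 DL) -!(compmA DL).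
rewrite !(compmA DL) -[dc (dc (dtm _ _) _) _](compmA DL) -(pentagon DL) -!(compmA DL).
have := asc_natural DL (t X Y) (did (FO Z)) (did (FO W)); rewrite (tensm11 DL) => nat_t.
by rewrite (compmA_eq DL _ nat_t).
Qed.

Lemma coface2_hexL :
  natural2 u -> coface2 w (hexL t u) X Y Z W = coface4 u (hexR w t) X Y Z W.
Proof.
move=> natu; rewrite /coface2 /coface4 /hexL /hexR !(tensm_comp1 DL) -!(compmA DL).
have := natu _ _ _ _ (casc X Y Z) (cid W); rewrite fm_id => ->.
have nat_w := asc_natural DL (did (FO X)) (w Y Z) (did (FO W)).
by rewrite (compmA_eq DL _ (esym nat_w)).
Qed.

End CofacePairing.

Lemma delta3_at_hex_defect w s m X Y Z W :
  delta3_at w (hex_defect s m) X Y Z W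
  = \sum_(i < m.+1) (delta3_at w (hexL (s i) (s (m - i)%N)) X Y Z W
                     - delta3_at w (hexR (s i) (s (m - i)%N)) X Y Z W).
Proof.
rewrite /delta3_at /coface0 /coface1 /coface2 /coface3 /coface4 /hex_defect.
rewrite ?(tensmBr DB, tensmBl DB, tensm_sumr DB, tensm_suml DB,
          compmBl DB, compmBr DB, compm_sumr DB, compm_suml DB).
by rewrite alternating5B !(sumrB, big_split).
Qed.

(* After expansion the ten triple sums cancel in pairs, up to a permutation of the
   summation indices, by the identities of [CofacePairing]. *)
Lemma hex_defect_bianchi N (s : nat -> fam2 F) : (forall i, natural2 (s i)) ->
  forall X Y Z W, \sum_(i < N.+1) delta3_at (s i) (hex_defect s (N - i)) X Y Z W = 0.
Proof.
move=> nats X Y Z W.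
under eq_bigr do rewrite delta3_at_hex_defect.
rewrite (triple_sumE N (fun i j k => delta3_at (s i) (hexL (s j) (s k)) X Y Z W
                                   - delta3_at (s i) (hexR (s j) (s k)) X Y Z W)).
rewrite /delta3_at !(triple_sumB, triple_sumD).
apply: alternating5B_eq0.
- rewrite -[RHS](triple_sum_rot N); apply: eq_triple_sum => i j k.
  exact: coface0_hexL.
- rewrite -[RHS](triple_sum_rot N); apply: eq_triple_sum => i j k.
  exact: coface4_hexL.
- rewrite -[RHS](triple_sum_rot N) -[RHS](triple_sum_rot N).
  by apply: eq_triple_sum => i j k; apply: coface2_hexL (nats k).
- rewrite -[RHS](triple_sum_rot N); apply: eq_triple_sum => i j k.
  exact: coface0_hexR (nats i).
- rewrite -[RHS](triple_sumC N); apply: eq_triple_sum => i j k.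
  exact: coface1_hexR.
Qed.

Definition zero2 : fam2 F := fun _ _ => 0.

Definition trunc (psi : nat -> fam2 F) (n : nat) : nat -> fam2 F :=
  fun k => if (k < n)%N then psi k else zero2.

Definition update (psi : nat -> fam2 F) (n : nat) (q : fam2 F) : nat -> fam2 F :=
  fun k => if k == n then q else psi k.

(* The obstruction to extending [F~ + sum_(k < n) psi k eps^k] to order [n]: the
   hexagon defect at order [n] when the new coefficient [psi n] is set to zero. *)
Definition obstruction (psi : nat -> fam2 F) (n : nat) : fam3 F :=
  hex_defect (defseq (trunc psi n)) n.

Lemma natural2_zero : natural2 zero2.
Proof. by move=> X Y X' Y' f g; rewrite /zero2 (comp0m DB) (compm0 DB). Qed.

Lemma natural3_hexL u v : natural2 u -> natural2 v -> natural3 (hexL u v).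
Proof.
move=> natu natv X Y Z X' Y' Z' f g h; rewrite /hexL -!(compmA DL) natv.
have nat_uid : dc (dtm (u X' Y') (did (FO Z'))) (dtm (FM (ctm f g)) (FM h))
             = dc (dtm (dtm (FM f) (FM g)) (FM h)) (dtm (u X Y) (did (FO Z))).
  by rewrite -!(tensm_comp DL) natu (comp1m DL) (compm1 DL).
by rewrite (compmA_eq DL _ nat_uid) (compmA_eq DL _ (asc_natural DL _ _ _)).
Qed.

Lemma natural3_hexR u v : natural2 u -> natural2 v -> natural3 (hexR u v).
Proof.
move=> natu natv X Y Z X' Y' Z' f g h.
rewrite /hexR -!(compmA DL) -fm_comp (asc_natural CL) fm_comp (compmA DL (v _ _)) natv.
have nat_idu : dc (dtm (did (FO X')) (u Y' Z')) (dtm (FM f) (FM (ctm g h)))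
             = dc (dtm (FM f) (dtm (FM g) (FM h))) (dtm (did (FO X)) (u Y Z)).
  by rewrite -!(tensm_comp DL) natu (comp1m DL) (compm1 DL).
by rewrite -(compmA DL) (compmA_eq DL _ nat_idu).
Qed.

Lemma natural3_hex_defect s m : (forall i, natural2 (s i)) -> natural3 (hex_defect s m).
Proof.
move=> nats X Y Z X' Y' Z' f g h.
rewrite /hex_defect (compmBl DB) (compmBr DB) (compm_suml DB) (compm_sumr DB).
rewrite (compm_suml DB) (compm_sumr DB); congr (_ - _); apply: eq_bigr => i _.
  exact: natural3_hexL.
exact: natural3_hexR.
Qed.

Lemma delta3_at_zero w (p : fam3 F) :
  (forall X Y Z, p X Y Z = 0) -> forall X Y Z W, delta3_at w p X Y Z W = 0.
Proof.
move=> p0 X Y Z W; rewrite /delta3_at /coface0 /coface1 /coface2 /coface3 /coface4 !p0.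
by rewrite ?(tensm0l DB, tensm0r DB, comp0m DB, compm0 DB) !subr0 !addr0.
Qed.

Lemma eq_hex_defect (s s' : nat -> fam2 F) m X Y Z :
  (forall j, (j <= m)%N -> s j = s' j) -> hex_defect s m X Y Z = hex_defect s' m X Y Z.
Proof.
move=> ss'; rewrite /hex_defect; congr (_ - _); apply: eq_bigr => i _;
  by have le_im := ltn_ord i; rewrite !ss' ?leq_subr.
Qed.

Lemma eq_hex_coef (s s' : nat -> fam2 F) m :
  (forall j, (j <= m)%N -> s j = s' j) -> hex_coef s m -> hex_coef s' m.
Proof.
move=> ss' /hex_coefP hex; apply/hex_coefP => X Y Z.
by rewrite -(eq_hex_defect _ _ _ ss').
Qed.

Lemma natural2_trunc n psi : is_deformation n psi ->
  forall i, natural2 (defseq (trunc psi n.+1) i).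
Proof.
case=> natpsi _ [|i] /=; first exact: ft_nat.
rewrite /trunc; case: ifP => [lt_in | _]; last exact: natural2_zero.
by apply: natpsi; rewrite ltnS in lt_in.
Qed.

Lemma hex_coef_trunc n psi m : is_deformation n psi -> (m <= n)%N ->
  hex_coef (defseq (trunc psi n.+1)) m.
Proof.
case=> _ hexpsi le_mn; apply: eq_hex_coef (hexpsi m le_mn) => -[|j] le_jm //=.
by rewrite /trunc ifT //; lia.
Qed.

(* In the Bianchi identity for the truncated sequence, every term but the one
   with [i = 0] has a vanishing hexagon defect. *)
Lemma obstruction_cocycle n psi : is_deformation n psi ->
  forall X Y Z W, delta3 (obstruction psi n.+1) X Y Z W = 0.
Proof.
move=> def X Y Z W.
have := hex_defect_bianchi n.+1 (natural2_trunc def) X Y Z W.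
rewrite big_ord_recl big1 ?addr0 // => i _.
apply: delta3_at_zero; apply/hex_coefP; apply: hex_coef_trunc def _.
by rewrite /= /bump /=; lia.
Qed.

Lemma hexL_eq0l u v X Y Z : u X Y = 0 -> hexL u v X Y Z = 0.
Proof. by move=> u0; rewrite /hexL u0 (tensm0l DB) (comp0m DB) (compm0 DB). Qed.
Lemma hexL_eq0r u v X Y Z : v (ct X Y) Z = 0 -> hexL u v X Y Z = 0.
Proof. by move=> v0; rewrite /hexL v0 !(compm0 DB). Qed.
Lemma hexR_eq0l u v X Y Z : u Y Z = 0 -> hexR u v X Y Z = 0.
Proof. by move=> u0; rewrite /hexR u0 (tensm0r DB) (comp0m DB). Qed.
Lemma hexR_eq0r u v X Y Z : v X (ct Y Z) = 0 -> hexR u v X Y Z = 0.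
Proof. by move=> v0; rewrite /hexR v0 (comp0m DB) (compm0 DB). Qed.

(* Setting [psi (n+1) := q] changes the hexagon defect at order [n+1] only through
   the terms pairing [q] with [F~], which add up to [delta2 q]. *)
Lemma hex_defect_update n psi q X Y Z :
  hex_defect (defseq (update psi n.+1 q)) n.+1 X Y Z
  = obstruction psi n.+1 X Y Z - delta2 q X Y Z.
Proof.
pose hL (t : nat -> fam2 F) i := hexL (t i) (t (n.+1 - i)%N) X Y Z.
pose hR (t : nat -> fam2 F) i := hexR (t i) (t (n.+1 - i)%N) X Y Z.
have hex_defectE t :
  hex_defect t n.+1 X Y Z = \sum_(i < n.+2) hL t i - \sum_(i < n.+2) hR t i by [].
set s := defseq (trunc psi n.+1); set s' := defseq (update psi n.+1 q).
have s's k : (0 < k < n.+1)%N -> s' k = s k.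
  case: k => [|k] //= lt_kn; rewrite /update /trunc lt_kn.
  by have -> : (k.+1 == n.+1) = false by apply/eqP; lia.
rewrite /obstruction -/s !hex_defectE !sumr_ord_ends.
have -> : \sum_(i < n) hL s' i.+1 = \sum_(i < n) hL s i.+1.
  by apply: eq_bigr => i _; have lt_in := ltn_ord i; rewrite /hL !s's //; lia.
have -> : \sum_(i < n) hR s' i.+1 = \sum_(i < n) hR s i.+1.
  by apply: eq_bigr => i _; have lt_in := ltn_ord i; rewrite /hR !s's //; lia.
rewrite /hL /hR subn0 subnn /s /s' /= /update /trunc eqxx ltnn.
rewrite [hexL FT zero2 X Y Z]hexL_eq0r // [hexL zero2 FT X Y Z]hexL_eq0l //.
rewrite [hexR FT zero2 X Y Z]hexR_eq0r // [hexR zero2 FT X Y Z]hexR_eq0l //.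
by rewrite delta2E subr_outer_terms.
Qed.

Lemma deformation_update n psi q : is_deformation n psi -> natural2 q ->
  (forall X Y Z, delta2 q X Y Z = obstruction psi n.+1 X Y Z) ->
  is_deformation n.+1 (update psi n.+1 q).
Proof.
case=> natpsi hexpsi natq dq; split.
  move=> k /andP[k0 le_kn]; rewrite /update; case: eqP => // ?.
  by apply: natpsi; apply/andP; split => //; lia.
move=> m; rewrite leq_eqVlt => /orP[/eqP-> | lt_mn].
  by apply/hex_coefP => X Y Z; rewrite hex_defect_update dq subrr.
apply: eq_hex_coef (hexpsi m _) => // -[|j] le_jm //=.
by rewrite /update; have -> : (j.+1 == n.+1) = false by apply/eqP; lia.
Qed.

Lemma eq_deformation n (psi psi' : nat -> fam2 F) :
  (forall j, (j <= n)%N -> psi j = psi' j) -> is_deformation n psi -> is_deformation n psi'.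
Proof.
move=> psi_psi' [natpsi hexpsi]; split.
  by move=> k /andP[k0 le_kn]; rewrite -psi_psi' //; apply: natpsi; rewrite k0.
move=> m le_mn; apply: eq_hex_coef (hexpsi m le_mn) => -[|j] le_jm //=.
by rewrite psi_psi' //; lia.
Qed.

Lemma deformation_le m n (psi : nat -> fam2 F) :
  (m <= n)%N -> is_deformation n psi -> is_deformation m psi.
Proof.
move=> le_mn [natpsi hexpsi]; split=> [k /andP[k0 le_km] | k le_km].
  by apply: natpsi; rewrite k0; lia.
by apply: hexpsi; lia.
Qed.

Section SubcomplexExtension.
Variables (P3 : fam3 F -> Prop) (P2 : fam2 F -> Prop).
Hypothesis H3_vanishes_P : forall p, natural3 p -> P3 p ->
  (forall X Y Z W, delta3 p X Y Z W = 0) ->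
  exists q, natural2 q /\ P2 q /\ (forall X Y Z, delta2 q X Y Z = p X Y Z).
Hypothesis P3_obstruction : forall n (psi : nat -> fam2 F),
  (forall k, (0 < k <= n)%N -> P2 (psi k)) ->
  is_deformation n psi -> P3 (obstruction psi n.+1).
Variable phi : fam2 F.
Hypotheses (phi_first_order : is_first_order phi) (P2phi : P2 phi).

Definition solution (p : fam3 F) : fam2 F := epsilon (inhabits zero2)
  (fun q => natural2 q /\ P2 q /\ (forall X Y Z, delta2 q X Y Z = p X Y Z)).

(* [extension k] is a deformation of order [k + 1], not [k]. *)
Fixpoint extension (k : nat) : nat -> fam2 F :=
  if k is k'.+1 then update (extension k') k.+1 (solution (obstruction (extension k') k.+1))
  else fun=> phi.

Lemma extension_spec k :
  is_deformation k.+1 (extension k) /\ (forall j, (0 < j <= k.+1)%N -> P2 (extension k j)).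
Proof.
elim: k => [|k [def P2ext]]; first by split=> // j /andP[j0 le_j1].
have solvable : exists q, natural2 q /\ P2 q /\
    (forall X Y Z, delta2 q X Y Z = obstruction (extension k) k.+2 X Y Z).
  apply: H3_vanishes_P; last exact: obstruction_cocycle.
  - exact/natural3_hex_defect/natural2_trunc.
  - exact: P3_obstruction.
have [natsol [P2sol dsol]] := epsilon_spec (inhabits zero2) _ solvable.
split; first exact: deformation_update.
move=> j le_jk /=; rewrite /update; case: eqP => // ?.
by apply: P2ext; lia.
Qed.

Lemma extension_stable k d j : (j <= k.+1)%N -> extension (k + d) j = extension k j.
Proof.
move=> le_jk; elim: d => [|d IHd]; first by rewrite addn0.
by rewrite addnS /= /update; have -> : (j == (k + d).+2) = false by apply/eqP; lia.
Qed.

Lemma series_extension : exists psi : nat -> fam2 F, extends phi psi /\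
  (forall n, is_deformation n psi /\ (forall k, (0 < k <= n)%N -> P2 (psi k))).
Proof.
exists (fun j => extension j j); split=> // n.
have extE j : (j <= n)%N -> extension n j = extension j j.
  by move=> le_jn; rewrite -(subnKC le_jn) extension_stable.
have [def P2ext] := extension_spec n; split.
  exact: eq_deformation extE (deformation_le (leqnSn n) def).
move=> k /andP[k0 le_kn]; rewrite -extE //; apply: P2ext; rewrite k0; lia.
Qed.

End SubcomplexExtension.

End Obstruction.

Section ProperDeformations.
Variables (K : fieldType) (C : MonCat) (D : LinMonCat K) (F : MonFunctor C D).

Local Notation dc := (Defs.comp (msemi (ldat D))).
Local Notation did := (idm (msemi (ldat D))).
Local Notation dtm := (tensm (msemi (ldat D))).
Local Notation FS := (mfs F).
Local Notation I := (Defs.unit (mdat C)).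

Let DL : semicat_laws (msemi (ldat D)) := proj1 (llaws D).
Let DB : bilin_laws (msemi (ldat D)) := llin D.

(* Since [F_0] and the unit constraints are invertible, the first-order unit
   axioms force [phi] itself to vanish on the unit object. *)
Lemma proper2_first_order (phi : fam2 FS) : is_proper_first_order phi -> proper2 phi.
Proof.
case=> _ /(_ 1%N isT) [philu phiru].
case: (llaws D) => [_ [luiK [_ [ruiK _]]]].
split=> A.
- have -> : phi I A = dc (dtm (f0i F) (did _)) (dc (lui (ldat D) _)
        (dc (lu (ldat D) _) (dc (dtm (f0 F) (did _)) (phi I A)))).
    rewrite (compmA DL (lui _ _)) luiK (comp1m DL) (compmA DL) -(tensm_comp DL).
    by rewrite f0_inv1 (comp1m DL) (tensm11 DL) (comp1m DL).
  by rewrite philu !(compm0 DB).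
- have -> : phi A I = dc (dtm (did _) (f0i F)) (dc (rui (ldat D) _)
        (dc (ru (ldat D) _) (dc (dtm (did _) (f0 F)) (phi A I)))).
    rewrite (compmA DL (rui _ _)) ruiK (comp1m DL) (compmA DL) -(tensm_comp DL).
    by rewrite f0_inv1 (comp1m DL) (tensm11 DL) (comp1m DL).
  by rewrite phiru !(compm0 DB).
Qed.

Lemma unit_coef_proper2 (psi : nat -> fam2 FS) k : proper2 (psi k) -> unit_coef psi k.
Proof. by case=> psiI1 psiI2; split=> A; rewrite ?psiI1 ?psiI2 !(compm0 DB). Qed.

Lemma proper3_hex (u v : fam2 FS) :
  [\/ forall X Y, u X Y = 0, forall X Y, v X Y = 0 | proper2 u /\ proper2 v] ->
  proper3 (hexL u v) /\ proper3 (hexR u v).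
Proof.
case=> [u0 | v0 | [[uI1 uI2] [vI1 vI2]]]; split; (split; [|split]) => *.
all: try by [apply: hexL_eq0l; apply: u0 | apply: hexR_eq0l; apply: u0].
all: try by [apply: hexL_eq0r; apply: v0 | apply: hexR_eq0r; apply: v0].
- exact: hexL_eq0l (uI1 _).
- exact: hexL_eq0l (uI2 _).
- exact: hexL_eq0r (vI2 _).
- exact: hexR_eq0r (vI1 _).
- exact: hexR_eq0l (uI1 _).
- exact: hexR_eq0l (uI2 _).
Qed.

Lemma proper3_hex_defect (s : nat -> fam2 FS) m :
  (forall i, (i <= m)%N ->
     [\/ forall X Y, s i X Y = 0, forall X Y, s (m - i)%N X Y = 0
        | proper2 (s i) /\ proper2 (s (m - i)%N)]) ->
  proper3 (hex_defect s m).
Proof.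
move=> s_ok; have hex_ok (i : 'I_m.+1) := proper3_hex (s_ok i (ltn_ord i)).
by split; [|split] => *; rewrite /hex_defect !big1 ?subr0 // => i _; apply hex_ok.
Qed.

Lemma proper3_obstruction n (psi : nat -> fam2 FS) :
  (forall k, (0 < k <= n)%N -> proper2 (psi k)) -> proper3 (obstruction psi n.+1).
Proof.
move=> psi_proper; apply: proper3_hex_defect => i le_in1.
set s := defseq (trunc psi n.+1).
have s_top X Y : s n.+1 X Y = 0 by rewrite /s /= /trunc ltnn.
have s_proper k : (0 < k)%N -> proper2 (s k).
  case: k => [|k] // _; rewrite /s /= /trunc; case: ifP => [lt_kn | _]; last by [].
  by apply: psi_proper.
have [-> | i_pos] := posnP i; first by apply: Or32 => X Y; rewrite subn0.
have [-> | lt_in1] : i = n.+1 \/ (i < n.+1)%N by lia.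
  exact: Or31.
by apply: Or33; split; apply: s_proper; lia.
Qed.

End ProperDeformations.

Theorem mainTheorem5 :
  (forall (K : fieldType) (C : SemiCat) (D : LinMonCat K) (F : SemiFunctor C D),
      H3_vanishes F ->
      forall phi : fam2 F, is_first_order phi ->
        (forall n : nat, exists psi : nat -> fam2 F,
            extends phi psi /\ is_deformation n psi) /\
        (exists psi : nat -> fam2 F,
            extends phi psi /\ is_series_deformation psi)) /\
  (forall (K : fieldType) (C : MonCat) (D : LinMonCat K) (F : MonFunctor C D),
      properH3_vanishes F ->
      forall phi : fam2 (mfs F), is_proper_first_order phi ->
        exists psi : nat -> fam2 (mfs F),
          extends phi psi /\ is_proper_series_deformation psi).
Proof.
split=> [K C D F H3 phi phi1 | K C D F H3 phi phi1].
- have H3_true : forall p : fam3 F, natural3 p -> True ->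
      (forall X Y Z W, delta3 p X Y Z W = 0) ->
      exists q, natural2 q /\ True /\ (forall X Y Z, delta2 q X Y Z = p X Y Z).
    by move=> p natp _ /(H3 p natp) [q [natq dq]]; exists q.
  have [psi [ext def]] := series_extension H3_true (fun _ _ _ _ => I) phi1 I.
  have series : is_series_deformation psi by move=> n; case: (def n).
  by split=> [n|]; exists psi.
- have [psi [ext def]] := series_extension H3 (fun n psi Pk _ => proper3_obstruction Pk)
    (proj1 phi1) (proper2_first_order phi1).
  exists psi; split=> // n; have [defn proper_psi] := def n.
  by split=> // k lt_kn; apply/unit_coef_proper2/proper_psi.
Qed.
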